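(* In the full-information setting, run Gaptron with gap map $a(\mathbf W_t,\mathbf x_t)=1-\mathbb 1[p_t^\star\ge 0.5]\,p_t^\star$, learning rate $\eta=\frac{\ln 2}{2KX^2}$, exploration rate $\gamma=0$, and the logistic loss $\ell_t(\mathbf W)=-\log_2\sigma(\mathbf W,\mathbf x_t,y_t)$. Then for every $\mathbf U\in\mathcal W$, $$\mathbb E\Big[\sum_{t=1}^T\mathbb 1[y'_t\ne y_t]\Big]\le\sum_{t=1}^T\ell_t(\mathbf U)+\frac{KX^2\|\mathbf U\|^2}{\ln 2}.$$
   Context: Setting and notation. Fix integers $K\ge 2$, $d\ge1$, $T\ge1$ and reals $X>0$, $D>0$. Matrices $\mathbf W\in\mathbb{R}^{K\times d}$ have rows $\mathbf W^1,\dots,\mathbf W^K\in\mathbb{R}^d$ and are identified with vectors in $\mathbb{R}^{Kd}$; $\langle\cdot,\cdot\rangle$ is the Euclidean inner product and $\|\cdot\|$ the Euclidean (Frobenius) norm. $\mathcal W=\{\mathbf W:\|\mathbf W\|\le D\}$. $\mathbf e_k$ is the $k$-th standard basis vector of $\mathbb R^K$ and $\mathbf 1\in\mathbb R^K$ the all-ones vector. In each round $t=1,\dots,T$ the environment chooses a label $y_t\in\{1,\dots,K\}$ and a feature vector $\mathbf x_t\in\mathbb R^d$ with $\|\mathbf x_t\|\le X$ (possibly depending on the learner's past predictions $y'_1,\dots,y'_{t-1}$ but not on its current random draw); the learner sees $\mathbf x_t$, outputs a random label $y'_t$, and then observes $y_t$ (full-information setting) or only $\mathbb 1[y'_t\ne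 y_t]$ (bandit setting). Gaptron, with learning rate $\eta>0$, exploration rate $\gamma\in[0,1]$, gap map $a:\mathbb R^{K\times d}\times\mathbb R^d\to[0,1]$ and loss functions $\ell_t$: set $\mathbf W_1=\mathbf 0$; for $t=1,\dots,T$: let $y_t^\star=\arg\max_k\langle \mathbf W_t^k,\mathbf x_t\rangle$ (ties broken arbitrarily), $a_t=a(\mathbf W_t,\mathbf x_t)$, $\mathbf p'_t=(1-\max\{a_t,\gamma\})\mathbf e_{y_t^\star}+\max\{a_t,\gamma\}\frac1K\mathbf 1$; draw $y'_t\sim\mathbf p'_t$ ($p'_t(k)$ denotes the probability of label $k$); set $\mathbf g_t=\nabla\ell_t(\mathbf W_t)$; update $\mathbf W_{t+1}=\arg\min_{\mathbf W\in\mathcal W}\ \eta\langle\mathbf g_t,\mathbf W\rangle+\frac12\|\mathbf W-\mathbf W_t\|^2$. $\mathbb E$ denotes expectation over the learner's randomization. Softmax: $\sigma(\mathbf W,\mathbf x,k)=\exp(\langle\mathbf W^k,\mathbf x\rangle)/\sum_{j=1}^K\exp(\langle\mathbf W^j,\mathbf x\rangle)$, and $p_t^\star=\max_k\sigma(\mathbf W_t,\mathbf x_t,k)$. *)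

From HB Require Import structures.
From mathcomp Require Import all_boot all_order all_algebra.
From mathcomp Require Import all_classical all_reals all_analysis.
Set Implicit Arguments. Unset Strict Implicit. Unset Printing Implicit Defensive.
Import Order.TTheory GRing.Theory Num.Theory.
Local Open Scope ring_scope.

Section Gaptron.
Variables (R : realType) (K d : nat).

Definition inner_row (W : 'M[R]_(K, d)) (x : 'rV[R]_d) (k : 'I_K) : R :=
  \sum_(j < d) W k j * x 0 j.

Definition mxdot (A B : 'M[R]_(K, d)) : R := \sum_(i < K) \sum_(j < d) A i j * B i j.
Definition mxnorm (A : 'M[R]_(K, d)) : R := Num.sqrt (mxdot A A).

Definition rnorm (x : 'rV[R]_d) : R := Num.sqrt (\sum_(j < d) x 0 j ^+ 2).

Definition softmax (W : 'M[R]_(K, d)) (x : 'rV[R]_d) (k : 'I_K) : R :=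
  expR (inner_row W x k) / \sum_(j < K) expR (inner_row W x j).

Definition pstar (W : 'M[R]_(K, d)) (x : 'rV[R]_d) : R :=
  \big[Num.max/0]_(k < K) softmax W x k.

Definition gap_logistic (W : 'M[R]_(K, d)) (x : 'rV[R]_d) : R :=
  1 - (if 1 / 2 <= pstar W x then pstar W x else 0).

Definition log2 (z : R) : R := ln z / ln 2.

Definition logloss (W : 'M[R]_(K, d)) (x : 'rV[R]_d) (y : 'I_K) : R :=
  - log2 (softmax W x y).

Definition is_argmax_label (ystar : 'M[R]_(K, d) -> 'rV[R]_d -> 'I_K) : Prop :=
  forall W x k, inner_row W x k <= inner_row W x (ystar W x).

(* G x y W is the gradient at W of W |-> logloss W x y: its Frobenius inner
   product with any direction V is the directional derivative along V. *)
Definition is_logloss_gradient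
  (G : 'rV[R]_d -> 'I_K -> 'M[R]_(K, d) -> 'M[R]_(K, d)) : Prop :=
  forall x y W V,
    is_derive (0 : R) (1 : R) (fun s : R => logloss (W + s *: V) x y)
      (mxdot (G x y W) V).

Definition is_proj_step (upd : 'M[R]_(K, d) -> 'M[R]_(K, d) -> 'M[R]_(K, d))
  (eta D : R) : Prop :=
  forall W g, mxnorm (upd W g) <= D /\
    forall V, mxnorm V <= D ->
      eta * mxdot g (upd W g) + 1 / 2 * mxnorm (upd W g - W) ^+ 2
      <= eta * mxdot g V + 1 / 2 * mxnorm (V - W) ^+ 2.

(* p'_t(k) = (1 - m) 1[k = y*] + m / K, with m = max{a_t, gamma} *)
Definition predprob (m : R) (ys k : 'I_K) : R :=
  (1 - m) * (k == ys)%:R + m / K%:R.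

Variables (a : 'M[R]_(K, d) -> 'rV[R]_d -> R) (gamma : R)
  (ystar : 'M[R]_(K, d) -> 'rV[R]_d -> 'I_K)
  (G : 'rV[R]_d -> 'I_K -> 'M[R]_(K, d) -> 'M[R]_(K, d))
  (upd : 'M[R]_(K, d) -> 'M[R]_(K, d) -> 'M[R]_(K, d))
  (adv : seq 'I_K -> 'rV[R]_d * 'I_K)
  (payoff : 'rV[R]_d -> 'I_K -> 'I_K -> R).

(* Expected total payoff, over the learner's randomization, of the remaining
   n rounds of full-information Gaptron, given the history h of the learner's
   past predictions and the current weights W.  The environment (adaptive)
   chooses (x_t, y_t) = adv h as a function of the past predictions; the
   payoff of round t is payoff x_t y_t y'_t. *)
Fixpoint gaptron_exp (n : nat) (h : seq 'I_K) (W : 'M[R]_(K, d)) : R :=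
  match n with
  | 0 => 0
  | n'.+1 =>
      let x := (adv h).1 in
      let y := (adv h).2 in
      let m := Num.max (a W x) gamma in
      let W' := upd W (G x y W) in
      \sum_(k < K) predprob m (ystar W x) k *
                   (payoff x y k + gaptron_exp n' (rcons h k) W')
  end.

End Gaptron.

From HB Require Import structures.
From mathcomp Require Import all_boot all_order all_algebra.
From mathcomp Require Import all_classical all_reals all_analysis.
From mathcomp Require Import ring lra.
Import Order.TTheory GRing.Theory Num.Theory.
Local Open Scope ring_scope.

Set Implicit Arguments. Unset Strict Implicit.

(* The proof is the standard potential argument of online gradient descent,
   with potential Phi(W) = ||U - W||^2 / (2 eta).  In every round
     E[mistake] + Phi(W_{t+1})
       <= E[mistake] + Phi(W_t) - <g_t, W_t - U> + eta/2 ||g_t||^2  (projection)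
       <= l_t(W_t) + <g_t, U - W_t> + Phi(W_t)                      (gap bound)
       <= l_t(U) + Phi(W_t)                                          (convexity)
   and summing over the rounds (inside the expectation over the learner's
   randomization) gives the theorem, since Phi(0) = K X^2 ||U||^2 / ln 2. *)

(* If l A + l^2 B / 2 >= 0 for all l in (0, 1], with B >= 0, then A >= 0:
   this turns minimality of a projection into first-order optimality. *)
Lemma nonneg_of_small_quadratic (R : realFieldType) (A B : R) : 0 <= B ->
  (forall l, 0 < l <= 1 -> 0 <= l * A + l ^+ 2 / 2 * B) -> 0 <= A.
Proof.
move=> hB key; rewrite leNgt; apply/negP => hA.
set l := - A / (B - A).
have hBA : 0 < B - A by lra.
have l0 : 0 < l by apply: divr_gt0; lra.
have l1 : l <= 1 by rewrite ler_pdivrMr //; lra.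
have el : l * (B - A) = - A by rewrite /l mulfVK // gt_eqF.
have := key l; rewrite l0 l1 => /(_ isT) hq.
have hneg : l * A * (1 + l) < 0 by rewrite pmulr_llt0 ?pmulr_rlt0; lra.
have e1 : l * B = - A + l * A by move: el; rewrite mulrBr; lra.
have e2 : l ^+ 2 * B = l * (- A + l * A) by rewrite expr2 -mulrA e1.
lra.
Qed.

Section Frobenius.
Variables (R : realType) (K d : nat).
Implicit Types (A B C : 'M[R]_(K, d)).

Lemma mxdotC A B : mxdot A B = mxdot B A.
Proof. by apply: eq_bigr => i _; apply: eq_bigr => j _; rewrite mulrC. Qed.

Lemma mxdotDl A B C : mxdot (A + B) C = mxdot A C + mxdot B C.
Proof.
rewrite /mxdot -big_split; apply: eq_bigr => i _.
by rewrite -big_split; apply: eq_bigr => j _; rewrite !mxE mulrDl.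
Qed.

Lemma mxdotZl c A B : mxdot (c *: A) B = c * mxdot A B.
Proof.
rewrite /mxdot mulr_sumr; apply: eq_bigr => i _.
by rewrite mulr_sumr; apply: eq_bigr => j _; rewrite !mxE mulrA.
Qed.

Lemma mxdotNl A B : mxdot (- A) B = - mxdot A B.
Proof. by rewrite -scaleN1r mxdotZl mulN1r. Qed.

Lemma mxdotDr A B C : mxdot C (A + B) = mxdot C A + mxdot C B.
Proof. by rewrite mxdotC mxdotDl !(mxdotC C). Qed.

Lemma mxdotZr c A B : mxdot B (c *: A) = c * mxdot B A.
Proof. by rewrite mxdotC mxdotZl mxdotC. Qed.

Lemma mxdotNr A B : mxdot B (- A) = - mxdot B A.
Proof. by rewrite mxdotC mxdotNl mxdotC. Qed.

Lemma mxdot_ge0 A : 0 <= mxdot A A.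
Proof.
by apply: sumr_ge0 => i _; apply: sumr_ge0 => j _; rewrite -expr2 sqr_ge0.
Qed.

Lemma mxnorm_sq A : mxnorm A ^+ 2 = mxdot A A.
Proof. by rewrite /mxnorm sqr_sqrtr // mxdot_ge0. Qed.

Lemma mxnorm_le A (D : R) : 0 <= D -> (mxnorm A <= D) = (mxdot A A <= D ^+ 2).
Proof. by move=> hD; rewrite -mxnorm_sq ler_sqr //; exact: sqrtr_ge0. Qed.

Lemma mxdot_delta A j i : mxdot A (delta_mx j i) = A j i.
Proof.
rewrite /mxdot (bigD1 j) //= [X in _ + X]big1 ?addr0.
  rewrite (bigD1 i) //= [X in _ + X]big1 ?addr0; first by rewrite mxE !eqxx mulr1.
  by move=> l hl; rewrite mxE eqxx (negbTE hl) mulr0.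
by move=> k hk; apply: big1 => l _; rewrite mxE (negbTE hk) mulr0.
Qed.

Lemma inner_rowD A B x k : inner_row (A + B) x k = inner_row A x k + inner_row B x k.
Proof. by rewrite /inner_row -big_split; apply: eq_bigr => j _; rewrite mxE mulrDl. Qed.

Lemma inner_rowZ c A x k : inner_row (c *: A) x k = c * inner_row A x k.
Proof. by rewrite /inner_row mulr_sumr; apply: eq_bigr => j _; rewrite mxE mulrA. Qed.

Lemma inner_row_delta j i x k :
  inner_row (delta_mx j i : 'M[R]_(K, d)) x k = (k == j)%:R * x 0 i.
Proof.
rewrite /inner_row; case: (eqVneq k j) => [->|hk].
  rewrite (bigD1 i) //= big1 ?addr0; first by rewrite mxE !eqxx.
  by move=> l hl; rewrite mxE eqxx (negbTE hl) mul0r.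
by rewrite mul0r; apply: big1 => l _; rewrite mxE (negbTE hk) mul0r.
Qed.

End Frobenius.

Ltac mxdot_expand :=
  repeat rewrite ?mxdotDl ?mxdotDr ?mxdotNl ?mxdotNr ?mxdotZl ?mxdotZr.

Section ProjectedStep.
Variables (R : realType) (K d : nat).
Variables (upd : 'M[R]_(K, d) -> 'M[R]_(K, d) -> 'M[R]_(K, d)) (eta D : R).
Hypotheses (hD : 0 <= D) (hupd : is_proj_step upd eta D).

Lemma ball_convex (V U : 'M[R]_(K, d)) (l : R) : mxnorm V <= D -> mxnorm U <= D ->
  0 <= l -> l <= 1 -> mxnorm (V + l *: (U - V)) <= D.
Proof.
rewrite !mxnorm_le // => hV hU l0 l1.
have hVU := mxdot_ge0 (V - U).
have h1 : 0 <= l * (1 - l) * mxdot (V - U) (V - U) by rewrite !mulr_ge0 //; lra.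
have h2 : 0 <= (1 - l) * (D ^+ 2 - mxdot V V) by apply: mulr_ge0; lra.
have h3 : 0 <= l * (D ^+ 2 - mxdot U U) by apply: mulr_ge0; lra.
move: h1; mxdot_expand; rewrite (mxdotC U V); lra.
Qed.

Lemma proj_step_optimality (W g U : 'M[R]_(K, d)) : mxnorm U <= D ->
  0 <= eta * mxdot g (U - upd W g) + mxdot (upd W g - W) (U - upd W g).
Proof.
move=> hU; have [hW' hmin] := hupd W g.
set W' := upd W g in hW' hmin *.
apply: (nonneg_of_small_quadratic (mxdot_ge0 (U - W'))) => l /andP[l0 l1].
have := hmin _ (ball_convex hW' hU (ltW l0) l1).
rewrite !mxnorm_sq; mxdot_expand.
rewrite ?(mxdotC W' W) ?(mxdotC U W) ?(mxdotC U W') ?(mxdotC W' g)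
        ?(mxdotC W g) ?(mxdotC U g).
lra.
Qed.

Lemma proj_step_descent (W g U : 'M[R]_(K, d)) : 0 < eta -> mxnorm U <= D ->
  mxdot (U - upd W g) (U - upd W g) / (2 * eta)
  <= mxdot (U - W) (U - W) / (2 * eta) - mxdot g (W - U) + eta / 2 * mxdot g g.
Proof.
move=> heta hU; have hopt := proj_step_optimality W g hU.
set W' := upd W g in hopt *.
have hsq := mxdot_ge0 ((W' - W) + eta *: g).
have key : 2 * eta * mxdot g (W - U)
    <= mxdot (U - W) (U - W) - mxdot (U - W') (U - W') + eta ^+ 2 * mxdot g g.
  move: hopt hsq; mxdot_expand.
  rewrite ?(mxdotC W' W) ?(mxdotC U W) ?(mxdotC U W') ?(mxdotC W' g)
          ?(mxdotC W g) ?(mxdotC U g).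
  lra.
have h2eta : 0 < 2 * eta by lra.
rewrite -(ler_pM2l h2eta).
have -> : 2 * eta * (mxdot (U - W') (U - W') / (2 * eta)) = mxdot (U - W') (U - W').
  by field; rewrite gt_eqF.
have -> : 2 * eta * (mxdot (U - W) (U - W) / (2 * eta) - mxdot g (W - U)
            + eta / 2 * mxdot g g)
          = mxdot (U - W) (U - W) - 2 * eta * mxdot g (W - U) + eta ^+ 2 * mxdot g g.
  by field; rewrite gt_eqF.
lra.
Qed.

End ProjectedStep.

Section LogBounds.
Variable R : realType.

Lemma ln_le_sub1 (s : R) : 0 < s -> ln s <= s - 1.
Proof.
by move=> hs; have := @le_ln1Dx R (s - 1); rewrite addrCA subrr addr0; apply; lra.
Qed.

Lemma ln2_gt0 : 0 < ln (2 : R).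
Proof. by apply: ln_gt0; rewrite ltr1n. Qed.

Lemma ln2_le1 : ln (2 : R) <= 1.
Proof. by have := @ln_le_sub1 2 (ltr0Sn _ 1); lra. Qed.

Lemma ln2_ge_half : 1 / 2 <= ln (2 : R).
Proof.
have h2 : 0 < (2 : R)^-1 by rewrite invr_gt0 (ltr0Sn _ 1).
by have := ln_le_sub1 h2; rewrite lnV ?posrE ?(ltr0Sn _ 1) // div1r; lra.
Qed.

Lemma ln_le_2s (s : R) : 0 < s -> ln s <= 2 * s - 1 - ln 2.
Proof.
move=> hs; have := @ln_le_sub1 (2 * s); rewrite lnM ?posrE //.
by move/(_ (mulr_gt0 (ltr0Sn _ 1) hs)); lra.
Qed.

End LogBounds.

Section LogSumExp.
Variables (R : realType) (K : nat).
Implicit Types (a b : 'I_K -> R).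

Lemma sumexp_gt0 (y : 'I_K) a : 0 < \sum_(j < K) expR (a j).
Proof.
rewrite (bigD1 y) //=; apply: ltr_pwDl; first exact: expR_gt0.
by apply: sumr_ge0 => j _; exact: expR_ge0.
Qed.

(* Convexity of log-sum-exp in first-order form: its linearization at a,
   whose slope is the softmax of a, lies below it. *)
Lemma lse_first_order (y : 'I_K) a b :
  ln (\sum_(j < K) expR (a j)) + (\sum_(j < K) expR (a j) * b j) / \sum_(j < K) expR (a j)
  <= ln (\sum_(j < K) expR (a j + b j)).
Proof.
set Z := \sum_(j < K) expR (a j); have hZ : 0 < Z := sumexp_gt0 y a.
set c := (\sum_(j < K) _) / Z.
have hcZ : c * Z = \sum_(j < K) expR (a j) * b j by rewrite divfK // gt_eqF.
have hsum : expR c * Z <= \sum_(j < K) expR (a j + b j).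
  have -> : expR c * Z = \sum_(j < K) expR (a j) * (expR c * (1 + (b j - c))).
    rewrite (eq_bigr (fun j => expR c * expR (a j) + expR c * (expR (a j) * b j)
       - expR c * c * expR (a j))); last by move=> j _; ring.
    by rewrite sumrB big_split /= -!mulr_sumr -/Z -hcZ; ring.
  apply: ler_sum => j _; rewrite expRD ler_pM2l ?expR_gt0 //.
  rewrite -[X in _ <= expR X](subrK c) expRD mulrC ler_pM2r ?expR_gt0 //.
  exact: expR_ge1Dx.
rewrite addrC -[c]expRK -lnM ?posrE ?expR_gt0 //.
by rewrite ler_ln ?posrE ?mulr_gt0 ?expR_gt0 // (sumexp_gt0 y).
Qed.

Lemma is_derive_affine (u v : R) : is_derive (0 : R) (1 : R) (fun s : R => u + s * v) v.
Proof.
have -> : (fun s : R => u + s * v) = cst u + v \*: id.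
  by apply/funext => s /=; rewrite mulrC.
by rewrite -[X in is_derive _ _ _ X]add0r -[X in is_derive _ _ _ (_ + X)]mulr1;
   apply: is_deriveD; apply: is_deriveZ.
Qed.

Lemma is_derive_expR_affine (u v : R) :
  is_derive (0 : R) (1 : R) (fun s : R => expR (u + s * v)) (expR u * v).
Proof.
have := @is_derive1_comp R expR (fun s => u + s * v) 0 (expR (u + 0 * v)) v
  (is_derive_expR _) (is_derive_affine u v).
by rewrite mul0r addr0.
Qed.

Lemma is_derive_lse (y : 'I_K) a b :
  is_derive (0 : R) (1 : R) (fun s : R => ln (\sum_(j < K) expR (a j + s * b j)))
    ((\sum_(j < K) expR (a j)) ^-1 * \sum_(j < K) expR (a j) * b j).
Proof.
set Z := fun s : R => \sum_(j < K) expR (a j + s * b j).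
have hZ : is_derive (0 : R) (1 : R) Z (\sum_(j < K) expR (a j) * b j).
  rewrite (_ : Z = \sum_(j < K) (fun s : R => expR (a j + s * b j))); last first.
    by rewrite fct_sumE.
  by apply: is_derive_sum => j; exact: is_derive_expR_affine.
have Z0 : Z 0 = \sum_(j < K) expR (a j).
  by apply: eq_bigr => j _; rewrite mul0r addr0.
have := is_derive1_comp (is_derive1_ln (_ : 0 < Z 0)) hZ.
by rewrite Z0; apply; exact: sumexp_gt0 y a.
Qed.

End LogSumExp.

Section Softmax.
Variables (R : realType) (K d : nat).
Implicit Types (W : 'M[R]_(K, d)) (x : 'rV[R]_d).

Lemma softmax_gt0 W x k : 0 < softmax W x k.
Proof. by rewrite /softmax divr_gt0 ?expR_gt0 // (sumexp_gt0 k). Qed.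

Lemma sum_softmax W x (y : 'I_K) : \sum_(k < K) softmax W x k = 1.
Proof. by rewrite /softmax -mulr_suml divff // gt_eqF // (sumexp_gt0 y). Qed.

Lemma softmax_le1 W x k : softmax W x k <= 1.
Proof.
rewrite -(sum_softmax W x k) (bigD1 k) //= lerDl.
by apply: sumr_ge0 => j _; exact/ltW/softmax_gt0.
Qed.

Lemma softmax_pair_le1 W x (y z : 'I_K) : z != y ->
  softmax W x y + softmax W x z <= 1.
Proof.
move=> hzy; rewrite -(sum_softmax W x y) (bigD1 y) //= lerD2l (bigD1 z) //= lerDl.
by apply: sumr_ge0 => j _; exact/ltW/softmax_gt0.
Qed.

Lemma softmax_le_pstar W x k : softmax W x k <= pstar W x.
Proof. exact: le_bigmax. Qed.

Lemma pstar_ge0 W x : 0 <= pstar W x.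
Proof. exact: bigmax_ge_id. Qed.

Lemma pstar_le1 W x : pstar W x <= 1.
Proof. by apply: bigmax_le => // k _; exact: softmax_le1. Qed.

Lemma pstar_le_argmax ystar : is_argmax_label ystar ->
  forall W x, pstar W x <= softmax W x (ystar W x).
Proof.
move=> hys W x; apply: bigmax_le; first exact/ltW/softmax_gt0.
move=> k _; rewrite /softmax ler_pM2r ?invr_gt0 ?(sumexp_gt0 k) //.
by rewrite ler_expR hys.
Qed.

Lemma logloss_lse W x y :
  logloss W x y = (ln (\sum_(j < K) expR (inner_row W x j)) - inner_row W x y) / ln 2.
Proof.
rewrite /logloss /log2 /softmax lnM ?posrE ?expR_gt0 ?invr_gt0 ?(sumexp_gt0 y) //.
by rewrite lnV ?posrE ?(sumexp_gt0 y) // expRK -mulNr opprB.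
Qed.

End Softmax.

Section LogisticGradient.
Variables (R : realType) (K d : nat).
Variable G : 'rV[R]_d -> 'I_K -> 'M[R]_(K, d) -> 'M[R]_(K, d).
Hypothesis hG : is_logloss_gradient G.

Lemma logloss_gradient_dot x y W V :
  mxdot (G x y W) V =
  (\sum_(j < K) softmax W x j * inner_row V x j - inner_row V x y) / ln 2.
Proof.
set a := inner_row W x; set b := inner_row V x.
have ef : (fun s : R => logloss (W + s *: V) x y) =
  (ln 2)^-1 \*: ((fun s : R => ln (\sum_(j < K) expR (a j + s * b j)))
                 - (fun s : R => a y + s * b y)).
  apply/funext => s /=; rewrite logloss_lse mulrC inner_rowD inner_rowZ.
  by congr (_ * (ln _ - _)); apply: eq_bigr => j _; rewrite inner_rowD inner_rowZ.
have hder := hG x y W V; rewrite ef in hder.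
have hder' := is_deriveZ (ln 2)^-1
  (is_deriveB (is_derive_lse y a b) (is_derive_affine (a y) (b y))).
rewrite -(@derive_val _ _ _ _ _ _ _ hder) (@derive_val _ _ _ _ _ _ _ hder') /=.
rewrite [LHS]mulrC mulr_sumr; congr ((_ - _) * _).
by apply: eq_bigr => j _; rewrite /softmax mulrA [_ * expR _]mulrC.
Qed.

Lemma logloss_gradient_entry x y W j i :
  G x y W j i = (softmax W x j - (j == y)%:R) * x 0 i / ln 2.
Proof.
rewrite -mxdot_delta logloss_gradient_dot inner_row_delta; congr (_ / _).
under eq_bigr do rewrite inner_row_delta mulrCA mulrC.
rewrite (bigD1 j) //= eqxx mulr1 big1 ?addr0; last first.
  by move=> k /negbTE ->; rewrite mulr0.
by rewrite eq_sym mulrBl.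
Qed.

Lemma logloss_gradient_sqnorm x y W (X : R) : 0 <= X -> rnorm x <= X ->
  mxdot (G x y W) (G x y W) <= 2 * (1 - softmax W x y) * X ^+ 2 / (ln 2) ^+ 2.
Proof.
move=> hX hx.
set c := fun j => softmax W x j - (j == y)%:R.
set S := \sum_(i < d) x 0 i ^+ 2.
have hS0 : 0 <= S by apply: sumr_ge0 => i _; exact: sqr_ge0.
have hSX : S <= X ^+ 2.
  rewrite -(sqr_sqrtr hS0) ler_sqr ?nnegrE //; exact: sqrtr_ge0.
have -> : mxdot (G x y W) (G x y W) = (\sum_(j < K) c j ^+ 2) * S / (ln 2) ^+ 2.
  rewrite -mulrA mulr_suml; apply: eq_bigr => j _.
  rewrite /S mulr_suml mulr_sumr; apply: eq_bigr => i _.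
  rewrite !logloss_gradient_entry /c.
  by move: (softmax W x j - _) (x 0 i) (ln (2 : R)) => p q r; rewrite -exprVn; ring.
have hc : \sum_(j < K) c j ^+ 2 <= 2 * (1 - softmax W x y).
  have hs := sum_softmax W x y; rewrite (bigD1 y) //= in hs.
  rewrite (bigD1 y) //= /c eqxx.
  have hrest : \sum_(j < K | j != y) (softmax W x j - (j == y)%:R) ^+ 2
             <= \sum_(j < K | j != y) softmax W x j.
    apply: ler_sum => j hj; rewrite (negbTE hj) subr0.
    by have := softmax_gt0 W x j; have := softmax_le1 W x j; nra.
  have := softmax_gt0 W x y; have := softmax_le1 W x y; move=> h1 h0.
  rewrite [true%:R]/=; nra.
have hL2 : 0 < ln (2 : R) ^+ 2 by rewrite exprn_gt0 // ln2_gt0.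
rewrite ler_pM2r ?invr_gt0 //.
have hc0 : 0 <= \sum_(j < K) c j ^+ 2 by apply: sumr_ge0 => j _; exact: sqr_ge0.
nra.
Qed.

Lemma logloss_first_order x y W U :
  logloss W x y + mxdot (G x y W) (U - W) <= logloss U x y.
Proof.
rewrite logloss_gradient_dot !logloss_lse.
set a := inner_row W x; set b := inner_row (U - W) x.
have hab j : inner_row U x j = a j + b j by rewrite -inner_rowD addrC subrK.
have hsoft : \sum_(j < K) softmax W x j * b j
           = (\sum_(j < K) expR (a j) * b j) / \sum_(j < K) expR (a j).
  by rewrite mulr_suml; apply: eq_bigr => j _; rewrite /softmax mulrAC.
have hlse := lse_first_order y a b.
under [X in _ <= (ln X - _) / _]eq_bigr do rewrite hab.
rewrite hab hsoft -mulrDl ler_pM2r ?invr_gt0 ?ln2_gt0 //; lra.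
Qed.

End LogisticGradient.

Section PredictionDistribution.
Variables (R : realType) (K : nat).
Implicit Types (m : R) (ys y : 'I_K).

Lemma sum_indicator y : \sum_(k < K) (k == y)%:R = 1 :> R.
Proof. by rewrite (bigD1 y) //= eqxx big1 ?addr0 // => k /negbTE ->. Qed.

Lemma predprob_sum1 m ys : \sum_(k < K) predprob m ys k = 1.
Proof.
have hK : (0 < K)%N by apply: leq_ltn_trans (ltn_ord ys).
rewrite /predprob big_split /= -mulr_sumr sum_indicator sumr_const card_ord mulr1.
by rewrite -[_ / _ *+ K]mulr_natr divfK ?subrK // pnatr_eq0 -lt0n.
Qed.

Lemma predprob_ge0 m ys k : 0 <= m <= 1 -> 0 <= predprob m ys k.
Proof.
move=> /andP[m0 m1]; apply: addr_ge0; last exact: divr_ge0.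
by apply: mulr_ge0; [lra | case: (k == ys)].
Qed.

Lemma predprob_mistake m ys y :
  \sum_(k < K) predprob m ys k * (k != y)%:R
  = (1 - m) * (ys != y)%:R + m / K%:R * (K%:R - 1).
Proof.
rewrite /predprob; under eq_bigr do rewrite mulrDl.
rewrite big_split /=; congr (_ + _).
  rewrite (bigD1 ys) //= eqxx mulr1 big1 ?addr0 // => k /negbTE ->.
  by rewrite mulr0 mul0r.
rewrite -mulr_sumr; congr (_ * _).
have e k : (k != y)%:R = 1 - (k == y)%:R :> R by case: (k == y); rewrite ?subr0 ?subrr.
under eq_bigr do rewrite e.
by rewrite sumrB sum_indicator sumr_const card_ord.
Qed.

End PredictionDistribution.

Section GapInequality.
Variables (R : realType) (K d : nat).
Implicit Types (W : 'M[R]_(K, d)) (x : 'rV[R]_d).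

(* The exploration weight m = max{a, 0} of the logistic gap map lies in
   [0, 1]: it is 1 - p_star when p_star >= 1/2 and 1 otherwise. *)
Lemma gap_logistic_bounds W x : 0 <= Num.max (gap_logistic W x) 0 <= 1.
Proof.
have h0 := pstar_ge0 W x; have h1 := pstar_le1 W x.
by rewrite /gap_logistic; case: ifP => hp; rewrite ?subr0 max_l; lra.
Qed.

(* Core of the gap inequality, multiplied through by K ln 2:
   K ln2 E[mistake] + (1 - sigma_y)/2 <= - K ln sigma_y.
   Three cases: p_star >= 1/2 and y_star = y (then sigma_y = p_star);
   p_star >= 1/2 and y_star <> y (then sigma_y <= 1 - p_star <= 1/2);
   p_star < 1/2 (the prediction is uniform and sigma_y < 1/2). *)
Lemma scaled_mistake_bound ystar (hys : is_argmax_label ystar) (hK : (2 <= K)%N) W x y :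
  ln 2 * K%:R * (1 - Num.max (gap_logistic W x) 0) * (ystar W x != y)%:R
  + ln 2 * Num.max (gap_logistic W x) 0 * (K%:R - 1) + (1 - softmax W x y) / 2
  <= - (K%:R * ln (softmax W x y)).
Proof.
set s := softmax W x y.
have hL1 : 1 / 2 <= ln (2 : R) := ln2_ge_half R.
have hL2 : ln (2 : R) <= 1 := ln2_le1 R.
have hKr : 2 <= K%:R :> R by rewrite (ler_nat R 2 K).
have hs0 : 0 < s := softmax_gt0 W x y.
have hs1 : s <= 1 := softmax_le1 W x y.
have hsp : s <= pstar W x := softmax_le_pstar W x y.
have hpys : pstar W x <= softmax W x (ystar W x) := pstar_le_argmax hys W x.
have hys1 : softmax W x (ystar W x) <= 1 := softmax_le1 W x (ystar W x).
have hp1 : pstar W x <= 1 := pstar_le1 W x.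
have hln1 : ln s <= s - 1 := ln_le_sub1 hs0.
have hln2 : ln s <= 2 * s - 1 - ln 2 := ln_le_2s hs0.
have hK1 : 0 <= K%:R * ((s - 1) - ln s) by apply: mulr_ge0; lra.
have hK2 : 0 <= K%:R * ((2 * s - 1 - ln 2) - ln s) by apply: mulr_ge0; lra.
rewrite /gap_logistic; case: ifP => hp; last first.
  move/negbT: hp; rewrite -ltNge => hp.
  rewrite subr0 max_l; last lra.
  have h3 : 0 <= K%:R * (1 - 2 * s) by apply: mulr_ge0; lra.
  lra.
rewrite max_l; last lra.
have [hy | hy] := eqVneq (ystar W x) y.
  have ps : pstar W x = s by move: hpys; rewrite hy -/s; lra.
  have h1 : 0 <= (1 - s) * (1 - ln 2) * (K%:R - 1) by rewrite !mulr_ge0 //; lra.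
  rewrite ps /=; lra.
have hss : s + softmax W x (ystar W x) <= 1 := softmax_pair_le1 W x hy.
have h1 : 0 <= ln 2 * (1 - pstar W x - s) by apply: mulr_ge0; lra.
have h2 : 0 <= (ln 2 - 1 / 2) * s by apply: mulr_ge0; lra.
have h3 : 0 <= (K%:R - 2) * (1 - 2 * s) by apply: mulr_ge0; lra.
rewrite /=; lra.
Qed.

Variables (ystar : 'M[R]_(K, d) -> 'rV[R]_d -> 'I_K)
  (G : 'rV[R]_d -> 'I_K -> 'M[R]_(K, d) -> 'M[R]_(K, d)).
Hypotheses (hys : is_argmax_label ystar) (hG : is_logloss_gradient G)
  (hK : (2 <= K)%N).

Lemma gap_inequality (X : R) x y W : 0 < X -> rnorm x <= X ->
  \sum_(k < K) predprob (Num.max (gap_logistic W x) 0) (ystar W x) k * (k != y)%:R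
  + ln 2 / (2 * K%:R * X ^+ 2) / 2 * mxdot (G x y W) (G x y W)
  <= logloss W x y.
Proof.
move=> hX hx; rewrite predprob_mistake /logloss /log2.
have hscaled := scaled_mistake_bound hys hK W x y.
set s := softmax W x y in hscaled *; set L := ln (2 : R) in hscaled *.
set Kr := K%:R in hscaled *; set m := Num.max _ _ in hscaled *.
set b := (ystar W x != y)%:R in hscaled *.
have hL : 0 < L := ln2_gt0 R.
have hKr : 0 < Kr by rewrite ltr0n; apply: leq_trans hK.
have hX2 : 0 < X ^+ 2 by rewrite exprn_gt0.
have hgrad : L / (2 * Kr * X ^+ 2) / 2 * mxdot (G x y W) (G x y W)
             <= (1 - s) / (2 * Kr * L).
  have hc : 0 <= L / (2 * Kr * X ^+ 2) / 2 by rewrite !divr_ge0 ?ltW ?mulr_gt0.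
  apply: le_trans (ler_wpM2l hc (logloss_gradient_sqnorm hG y W (ltW hX) hx)) _.
  by rewrite -/s -/L le_eqVlt; apply/orP; left; apply/eqP; field; rewrite !gt_eqF.
apply: le_trans (lerD (lexx _) hgrad) _.
rewrite -(ler_pM2l (mulr_gt0 hKr hL)).
have -> : Kr * L * ((1 - m) * b + m / Kr * (Kr - 1) + (1 - s) / (2 * Kr * L))
          = L * Kr * (1 - m) * b + L * m * (Kr - 1) + (1 - s) / 2.
  by field; rewrite !gt_eqF.
have -> : Kr * L * (- (ln s / L)) = - (Kr * ln s) by field; rewrite gt_eqF.
exact: hscaled.
Qed.

End GapInequality.

Section Potential.
Variables (R : realType) (K d : nat).
Variables (a : 'M[R]_(K, d) -> 'rV[R]_d -> R) (gamma : R)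
  (ystar : 'M[R]_(K, d) -> 'rV[R]_d -> 'I_K)
  (G : 'rV[R]_d -> 'I_K -> 'M[R]_(K, d) -> 'M[R]_(K, d))
  (upd : 'M[R]_(K, d) -> 'M[R]_(K, d) -> 'M[R]_(K, d))
  (adv : seq 'I_K -> 'rV[R]_d * 'I_K).

Lemma gaptron_exp_potential (p1 p2 : 'rV[R]_d -> 'I_K -> 'I_K -> R)
    (Phi : 'M[R]_(K, d) -> R) :
  (forall W x, 0 <= Num.max (a W x) gamma <= 1) ->
  (forall W, 0 <= Phi W) ->
  (forall h W,
     let x := (adv h).1 in let y := (adv h).2 in
     let p' := predprob (Num.max (a W x) gamma) (ystar W x) in
     \sum_(k < K) p' k * p1 x y k + Phi (upd W (G x y W))
     <= \sum_(k < K) p' k * p2 x y k + Phi W) ->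
  forall n h W, gaptron_exp a gamma ystar G upd adv p1 n h W
                <= gaptron_exp a gamma ystar G upd adv p2 n h W + Phi W.
Proof.
move=> hm hPhi hround; elim=> [|n IH] h W /=; first by rewrite add0r.
have := hround h W; rewrite /=.
set x := (adv h).1; set y := (adv h).2; set W' := upd W _.
set p' := predprob _ _ => hstep.
have hp'1 : \sum_(k < K) p' k = 1 by exact: predprob_sum1.
set E1 := fun k => gaptron_exp a gamma ystar G upd adv p1 n (rcons h k) W'.
set E2 := fun k => gaptron_exp a gamma ystar G upd adv p2 n (rcons h k) W'.
have hrec : \sum_(k < K) p' k * (p1 x y k + E1 k)
            <= \sum_(k < K) p' k * p1 x y k + Phi W' + \sum_(k < K) p' k * E2 k.
  rewrite -[Phi W']mul1r -hp'1 mulr_suml -!big_split /=.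
  apply: ler_sum => k _; rewrite -!mulrDr ler_wpM2l ?predprob_ge0 //.
  by rewrite -addrA lerD2l addrC; exact: IH.
apply: le_trans hrec _.
under [X in _ <= X + _]eq_bigr do rewrite mulrDr.
rewrite big_split /=; lra.
Qed.

End Potential.

Theorem theorem1 (R : realType) (K d T : nat) (X D : R)
  (hK : (2 <= K)%N) (hd : (1 <= d)%N) (hT : (1 <= T)%N)
  (hX : 0 < X) (hD : 0 < D)
  (ystar : 'M[R]_(K, d) -> 'rV[R]_d -> 'I_K)
  (hys : is_argmax_label ystar)
  (G : 'rV[R]_d -> 'I_K -> 'M[R]_(K, d) -> 'M[R]_(K, d))
  (hG : is_logloss_gradient G)
  (upd : 'M[R]_(K, d) -> 'M[R]_(K, d) -> 'M[R]_(K, d))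
  (hupd : is_proj_step upd (ln 2 / (2 * K%:R * X ^+ 2)) D)
  (adv : seq 'I_K -> 'rV[R]_d * 'I_K)
  (hadv : forall h, rnorm (adv h).1 <= X)
  (U : 'M[R]_(K, d)) (hU : mxnorm U <= D) :
  gaptron_exp (@gap_logistic R K d) 0 ystar G upd adv
    (fun x y k => (k != y)%:R) T [::] 0
  <= gaptron_exp (@gap_logistic R K d) 0 ystar G upd adv
       (fun x y k => logloss U x y) T [::] 0
     + K%:R * X ^+ 2 * mxnorm U ^+ 2 / ln 2.
Proof.
set eta := ln 2 / (2 * K%:R * X ^+ 2).
have hL := ln2_gt0 R.
have hKr : 0 < K%:R :> R by rewrite ltr0n; apply: leq_trans hK.
have heta : 0 < eta by rewrite divr_gt0 // !mulr_gt0 ?exprn_gt0.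
(* The potential Phi(W) = ||U - W||^2 / (2 eta) starts at K X^2 ||U||^2 / ln 2. *)
have -> : K%:R * X ^+ 2 * mxnorm U ^+ 2 / ln 2 = mxdot (U - 0) (U - 0) / (2 * eta).
  by rewrite subr0 mxnorm_sq /eta; field; rewrite !gt_eqF // exprn_gt0.
apply: (gaptron_exp_potential (Phi := fun W => mxdot (U - W) (U - W) / (2 * eta)))
  => [W x | W | h W /=].
- exact: gap_logistic_bounds.
- by rewrite divr_ge0 ?mxdot_ge0 // ltW // mulr_gt0.
- set x := (adv h).1; set y := (adv h).2; set g := G x y W.
  have hgap := gap_inequality hys hG hK y W hX (hadv h).
  have hconv := logloss_first_order hG x y W U.
  have hdesc := proj_step_descent (ltW hD) hupd W g heta hU.
  rewrite -mulr_suml predprob_sum1 mul1r.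
  rewrite -opprB mxdotNr -/g in hconv.
  rewrite -/x -/eta -/g in hgap; rewrite -/eta in hdesc.
  lra.
Qed.
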